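(* Let $S$ be a finite set of points in the plane and let $\mathcal{F}$ be the family of halfplanes. Then the Delaunay-edges of $S$ with respect to $\mathcal{F}$ can be $2$-colored such that every halfplane that contains at least three Delaunay-edges contains two Delaunay-edges of different colors. Moreover, this statement is false if ''three'' is replaced by ''two'': there is a finite point set $S$ in the plane such that for every $2$-coloring of its Delaunay-edges with respect to halfplanes, some halfplane contains at least two Delaunay-edges, all of the same color.
   Context: For a finite point set $S$ and a family of regions $\mathcal{F}$, the Delaunay-edges of $S$ with respect to $\mathcal{F}$ are the $2$-element subsets $\{p,q\}\subseteq S$ for which there is $F\in\mathcal{F}$ with $S\cap F=\{p,q\}$. A region contains a Delaunay-edge if it contains both of its endpoints. *)

From HB Require Import structures.
From mathcomp Require Import all_boot all_order all_algebra.
From mathcomp Require Import finmap.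
From mathcomp Require Import reals.
Set Implicit Arguments. Unset Strict Implicit. Unset Printing Implicit Defensive.
Import Order.TTheory GRing.Theory Num.Theory.
Local Open Scope fset_scope.
Local Open Scope ring_scope.

Definition in_hp (R : realType) (a b c : R) (p : R * R) : bool :=
  a * p.1 + b * p.2 <= c.

Definition is_halfplane (R : realType) (a b c : R) : Prop := (a, b) != (0, 0).

Definition delaunay_edge (R : realType) (S e : {fset (R * R)}) : Prop :=
  e `<=` S /\ #|` e| = 2%N /\
  exists a b c : R, is_halfplane a b c /\
    forall x, x \in S -> (x \in e) = in_hp a b c x.

Definition hp_contains (R : realType) (a b c : R) (e : {fset (R * R)}) : Prop :=
  forall x, x \in e -> in_hp a b c x.

From HB Require Import structures.
From mathcomp Require Import all_boot all_order all_algebra.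
From mathcomp Require Import finmap.
From mathcomp Require Import reals.
From mathcomp Require Import boolp.
From mathcomp Require Import ring lra.
Set Implicit Arguments. Unset Strict Implicit. Unset Printing Implicit Defensive.
Import Order.TTheory GRing.Theory Num.Theory.
Local Open Scope fset_scope.
Local Open Scope ring_scope.

(* Every Delaunay edge e of S is cut off by a halfplane; fix an outer normal of one such
   halfplane for each e.  Distinct edges get normals of distinct directions, so the edges are
   linearly ordered by the angle of their normals; colour them by the parity of their rank.
   For a halfplane H with outer normal n, an edge whose normal lies in the cone spanned by n
   and the normal of an edge inside H is itself inside H.  Hence, around the circle of
   directions, the edges inside H and those outside H are never interleaved.  If three edges
   inside H had the same colour, the successors of the first two of them in the angular order
   would lie outside H and produce such an interleaving.
   For the second claim, the sides of a convex pentagon are Delaunay edges; any 2-colouring of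
   this 5-cycle has two consecutive sides of the same colour, and a halfplane containing
   exactly their three vertices contains no other Delaunay edge, since the diagonal is not
   one. *)

Section PseudoAngle.
Variable R : realType.
Implicit Types (a u v : R * R) (t : R).

Definition cross u v := u.1 * v.2 - u.2 * v.1.
Definition dotp u v := u.1 * v.1 + u.2 * v.2.
Definition l1norm v := `|v.1| + `|v.2|.
Definition upper v := (0 < v.2) || ((v.2 == 0) && (0 < v.1)).

(* The "diamond angle": an increasing reparametrisation of the polar angle
   of v onto [0, 4), one unit per quarter turn. *)
Definition pangle v := if upper v then 1 - v.1 / l1norm v else 3 + v.1 / l1norm v.

(* Reduces a difference of two pseudo-angles, which lies in (-4, 4), to [0, 4). *)
Definition mod4 t := if t < 0 then t + 4 else t.

Lemma l1norm_gt0 v : v != 0 -> 0 < l1norm v.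
Proof.
case: v => x y /= v0; rewrite /l1norm /=.
have [x0|x0] := eqVneq x 0; last by apply: ltr_pwDl; rewrite ?normr_gt0.
rewrite x0 normr0 add0r normr_gt0; apply: contraNneq v0 => y0.
by apply/eqP; rewrite x0 y0.
Qed.

Lemma upper_neq0 v : upper v -> v != 0.
Proof. by case: v => x y; apply: contraTneq => -[-> ->]; rewrite /upper ltxx andbF. Qed.

Lemma upper_ge0 v : upper v -> 0 <= v.2.
Proof. by case/orP => [/ltW|/andP[/eqP-> _]]. Qed.

Lemma upperN v : v != 0 -> upper (- v) = ~~ upper v.
Proof.
case: v => x y v0; rewrite /upper /= oppr_gt0 oppr_eq0 oppr_gt0.
have [//|//|y0] := ltrgtP y 0.
have x0 : x != 0 by apply: contraNneq v0 => x0; apply/eqP; rewrite x0 y0.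
by rewrite -leNgt le_eqVlt (negbTE x0).
Qed.

Lemma l1normN v : l1norm (- v) = l1norm v.
Proof. by rewrite /l1norm /= !normrN. Qed.

Lemma pangle_ratio_bounds v : v != 0 ->
  [/\ -1 <= v.1 / l1norm v <= 1, upper v -> -1 < v.1 / l1norm v
    & ~~ upper v -> v.1 / l1norm v < 1].
Proof.
move=> v0; have n0 := l1norm_gt0 v0.
rewrite ler_pdivlMr // ler_pdivrMr // ltr_pdivlMr // ltr_pdivrMr // mul1r mulN1r.
move: v0 {n0}; rewrite /upper /l1norm; case: v => x y /= v0.
have xn : x <= `|x| := ler_norm x.
have Nxn : - x <= `|x| by rewrite -normrN ler_norm.
have y0 := normr_ge0 y.
have y_pos : y != 0 -> 0 < `|y| by rewrite normr_gt0.
split; first by apply/andP; split; lra.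
- case/orP => [yp|/andP[/eqP-> x0]]; first by have := y_pos (lt0r_neq0 yp); lra.
  by rewrite normr0 gtr0_norm //; lra.
- rewrite negb_or negb_and -!leNgt => /andP[yle /orP[yn|x0]].
    by have := y_pos yn; lra.
  have [y00|/y_pos ?] := eqVneq y 0; last lra.
  have x0' : x != 0 by apply: contraNneq v0 => x00; apply/eqP; rewrite x00 y00.
  have : 0 < `|x| by rewrite normr_gt0.
  by rewrite y00 normr0 ler0_norm //; lra.
Qed.

Lemma pangle_range v : v != 0 -> 0 <= pangle v < 4.
Proof.
move=> v0; have [/andP[? ?] up dn] := pangle_ratio_bounds v0.
by rewrite /pangle; case: ifP => [/up|/negbT/dn] ?; apply/andP; split; lra.
Qed.

Lemma pangle_upper_lt2 v : upper v -> pangle v < 2.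
Proof.
by move=> vu; have [_ /(_ vu) ? _] := pangle_ratio_bounds (upper_neq0 vu); rewrite /pangle vu; lra.
Qed.

Lemma pangleN v : v != 0 -> ~~ upper v -> pangle v = pangle (- v) + 2.
Proof.
move=> v0 vu; rewrite /pangle upperN // vu (negbTE vu) l1normN /= mulNr; lra.
Qed.

Lemma crossNl u v : cross (- u) v = - cross u v.
Proof. by rewrite /cross /=; ring. Qed.

Lemma crossNr u v : cross u (- v) = - cross u v.
Proof. by rewrite /cross /=; ring. Qed.

Lemma dotpNl u v : dotp (- u) v = - dotp u v.
Proof. by rewrite /dotp /=; ring. Qed.

Lemma dotpNr u v : dotp u (- v) = - dotp u v.
Proof. by rewrite /dotp /=; ring. Qed.

Lemma upper_cross0_dotp_gt0 u v : upper u -> upper v -> cross u v = 0 -> 0 < dotp u v.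
Proof.
case: u v => [x1 y1] [x2 y2]; rewrite /upper /cross /dotp /=.
case/orP => [h1|/andP[/eqP-> h1]]; case/orP => [h2|/andP[/eqP-> h2]] c; try nra.
have /subr0_eq e : y1 * (x1 * x2 + y1 * y2) - y2 * (x1 ^+ 2 + y1 ^+ 2) = 0.
  by transitivity (- x1 * (x1 * y2 - y1 * x2)); [ring | rewrite c mulr0].
have : 0 < y2 * (x1 ^+ 2 + y1 ^+ 2) by rewrite pmulr_rgt0 //; nra.
by rewrite -e pmulr_rgt0.
Qed.

Lemma upper_pangle_cross u v : upper u -> upper v ->
  [/\ 0 < cross u v -> pangle u < pangle v,
      cross u v < 0 -> pangle v < pangle u &
      cross u v = 0 -> pangle u = pangle v /\ 0 < dotp u v].
Proof.
move=> uu vu; have nu := l1norm_gt0 (upper_neq0 uu); have nv := l1norm_gt0 (upper_neq0 vu).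
have N := mulr_gt0 nu nv.
have diffE : (pangle v - pangle u) * (l1norm u * l1norm v) =
    u.1 * l1norm v - v.1 * l1norm u.
  by rewrite /pangle uu vu; field; rewrite !lt0r_neq0.
have [pos neg zero] : [/\ 0 < cross u v -> 0 < u.1 * l1norm v - v.1 * l1norm u,
    cross u v < 0 -> u.1 * l1norm v - v.1 * l1norm u < 0 &
    cross u v = 0 -> u.1 * l1norm v - v.1 * l1norm u = 0].
  rewrite /l1norm /cross (ger0_norm (upper_ge0 uu)) (ger0_norm (upper_ge0 vu)).
  move: uu vu (upper_ge0 uu) (upper_ge0 vu); rewrite /upper.
  case: u v {nu nv N diffE} => [x1 y1] [x2 y2] /=.
  case/orP => [h1|/andP[/eqP-> h1]]; case/orP => [h2|/andP[/eqP-> h2]] => ? ?;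
    have [a1|a1] := lerP 0 x1; have [a2|a2] := lerP 0 x2;
    rewrite ?(ger0_norm a1) ?(ltr0_norm a1) ?(ger0_norm a2) ?(ltr0_norm a2);
    split=> ?; nra.
split.
- by move/pos; rewrite -diffE pmulr_lgt0 // subr_gt0.
- by move/neg; rewrite -diffE pmulr_llt0 // subr_lt0.
- move=> c; split; last exact: upper_cross0_dotp_gt0.
  by move/zero: c; rewrite -diffE => /eqP; rewrite mulf_eq0 (gt_eqF N) orbF subr_eq0 eq_sym => /eqP.
Qed.

Lemma upper_or_opp v : v != 0 ->
  exists2 w, upper w & (v = w /\ pangle v = pangle w) \/ (v = - w /\ pangle v = pangle w + 2).
Proof.
move=> v0; have [vu|vu] := boolP (upper v); first by exists v => //; left.
exists (- v); first by rewrite upperN.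
by right; rewrite opprK pangleN.
Qed.

Lemma pangle_cross u v : u != 0 -> v != 0 ->
  [/\ 0 < cross u v -> 0 < mod4 (pangle v - pangle u) < 2,
      cross u v < 0 -> 2 < mod4 (pangle v - pangle u) < 4 &
      cross u v = 0 ->
        (mod4 (pangle v - pangle u) = 0 /\ 0 < dotp u v) \/
        (mod4 (pangle v - pangle u) = 2 /\ dotp u v < 0)].
Proof.
(* Negating a vector shifts its pseudo-angle by 2 and flips the signs of cross and dot. *)
move=> u0 v0.
have [u' uu [[-> _]|[-> ->]]] := upper_or_opp u0;
have [v' vu [[-> _]|[-> ->]]] := upper_or_opp v0;
have [pos neg zero] := upper_pangle_cross uu vu;
have /andP[? ?] := pangle_range (upper_neq0 uu); have ? := pangle_upper_lt2 uu;
have /andP[? ?] := pangle_range (upper_neq0 vu); have ? := pangle_upper_lt2 vu;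
rewrite ?crossNl ?crossNr ?dotpNl ?dotpNr ?opprK /mod4; split=> c.
all: first [ have := pos ltac:(lra) | have := neg ltac:(lra) | have [] := zero ltac:(lra) ].
all: by move=> *; case: ifP => ?; first [apply/andP; split; lra | left; split; lra | right; split; lra].
Qed.

Lemma dotp_self_gt0 a : a != 0 -> 0 < dotp a a.
Proof.
case: a => x y a0; rewrite /dotp /= lt_neqAle eq_sym -!expr2 addr_ge0 ?sqr_ge0 // andbT.
apply: contra a0; rewrite paddr_eq0 ?sqr_ge0 // !sqrf_eq0 => /andP[/eqP-> /eqP->].
exact/eqP.
Qed.

Lemma cross0_scale a u : a != 0 -> cross a u = 0 ->
  u = (dotp a u / dotp a a * a.1, dotp a u / dotp a a * a.2).
Proof.
move=> /dotp_self_gt0/lt0r_neq0 n0; case: a n0 => a1 a2; case: u => u1 u2.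
rewrite /cross /dotp /= => n0 c.
congr pair; rewrite mulrAC; apply: (mulIf n0); rewrite divfK //.
- by transitivity ((a1 * u1 + a2 * u2) * a1 - a2 * (a1 * u2 - a2 * u1)); [ring|rewrite c mulr0 subr0].
- by transitivity ((a1 * u1 + a2 * u2) * a2 + a1 * (a1 * u2 - a2 * u1)); [ring|rewrite c mulr0 addr0].
Qed.

Lemma cramer a u v : cross a v != 0 ->
  u = (cross u v / cross a v * a.1 + cross a u / cross a v * v.1,
       cross u v / cross a v * a.2 + cross a u / cross a v * v.2).
Proof.
case: a u v => [a1 a2] [u1 u2] [v1 v2]; rewrite /cross /= => c0.
by congr pair; field.
Qed.

Lemma mod4_sub (pa pu pv : R) : 0 <= pa < 4 -> 0 <= pu < 4 -> 0 <= pv < 4 ->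
  mod4 (pu - pa) <= mod4 (pv - pa) < 2 -> mod4 (pv - pu) = mod4 (pv - pa) - mod4 (pu - pa).
Proof.
rewrite /mod4 => /andP[? ?] /andP[? ?] /andP[? ?].
by do 3 case: ifP => ?; move=> /andP[? ?]; lra.
Qed.

Lemma mod4_shift (k p : R) : mod4 (k - p) = if k < p then k - p + 4 else k - p.
Proof. by rewrite /mod4 subr_lt0. Qed.

Lemma mod4_sub_cyclic (p k1 k2 k3 k4 : R) : 0 <= p < 4 -> 0 <= k1 -> k4 < 4 ->
  k1 < k2 < k3 -> k3 < k4 ->
  let t k := mod4 (k - p) in
  [\/ t k1 < t k2 < t k3 /\ t k3 < t k4, t k2 < t k3 < t k4 /\ t k4 < t k1,
       t k3 < t k4 < t k1 /\ t k1 < t k2 | t k4 < t k1 < t k2 /\ t k2 < t k3].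
Proof.
move=> /andP[? ?] ? ? /andP[? ?] ? /=; rewrite !mod4_shift.
have [?|?] := lerP p k1; [constructor 1|have [?|?] := lerP p k2; [constructor 2|
  have [?|?] := lerP p k3; [constructor 3|have [?|?] := lerP p k4; [constructor 4|constructor 1]]]].
all: repeat match goal with |- context [if ?x < ?y then _ else _] =>
  first [ rewrite (_ : (x < y) = true); last by lra
        | rewrite (_ : (x < y) = false); last by apply/negbTE; rewrite -leNgt; lra ] end.
all: by split; [apply/andP; split|]; lra.
Qed.

Lemma mod4_sub_swap (p g h : R) : 0 <= p < 4 -> 0 <= g < 4 -> 0 <= h < 4 ->
  2 < mod4 (g - p) -> ~~ (0 < mod4 (h - p) < mod4 (g - p)) ->
  mod4 (h - g) <= mod4 (p - g) < 2.
Proof.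
move=> /andP[? ?] /andP[? ?] /andP[? ?]; rewrite !mod4_shift.
do 4 case: ifP => ?; rewrite ?negb_and -?leNgt; try case/orP; move=> *; apply/andP; split; lra.
Qed.

Lemma conic_of_angle_between a u v : a != 0 -> u != 0 -> v != 0 ->
  mod4 (pangle u - pangle a) <= mod4 (pangle v - pangle a) < 2 ->
  exists al be : R, [/\ 0 <= al, 0 <= be &
     u = (al * a.1 + be * v.1, al * a.2 + be * v.2)].
Proof.
move=> a0 u0 v0 /[dup] between /andP[le_uv lt_v2].
have [au_pos au_neg au_zero] := pangle_cross a0 u0.
have [av_pos av_neg av_zero] := pangle_cross a0 v0.
have [uv_pos uv_neg uv_zero] := pangle_cross u0 v0.
have uv := mod4_sub (pangle_range a0) (pangle_range u0) (pangle_range v0) between.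
have [cau|cau|cau] := ltrgtP (cross a u) 0.
- by have /andP[] := au_neg cau; lra.
- have /andP[? ?] := au_pos cau.
  have cav : 0 < cross a v.
    have [c|//|c] := ltrgtP (cross a v) 0; first by have /andP[] := av_neg c; lra.
    by case: (av_zero c) => -[]; lra.
  have cuv : 0 <= cross u v.
    by rewrite leNgt; apply/negP => /uv_neg /andP[]; lra.
  exists (cross u v / cross a v), (cross a u / cross a v); split.
  + by rewrite divr_ge0 // ltW.
  + by rewrite divr_ge0 // ltW.
  + exact/cramer/lt0r_neq0.
- case: (au_zero cau) => -[d dpos]; last by lra.
  exists (dotp a u / dotp a a), 0; split => //.
  + by rewrite divr_ge0 ?ltW ?dotp_self_gt0.
  + by rewrite !mul0r !addr0 -cross0_scale.
Qed.

End PseudoAngle.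

Section EdgeNormal.
Variables (R : realType) (S : {fset (R * R)}).
Implicit Types (e h : {fset (R * R)}) (d : R * R).

Definition separates e d :=
  forall p q, p \in S -> q \in S -> p \in e -> q \notin e -> dotp d p < dotp d q.

Definition edge_normal e : R * R :=
  if pselect (exists d, d != 0 /\ separates e d) is left ex then projT1 (cid ex) else 0.

Definition edge_angle e := pangle (edge_normal e).

Lemma delaunay_separates e : delaunay_edge S e -> exists d, d != 0 /\ separates e d.
Proof.
move=> [_ [_ [a [b [c [ab0 eH]]]]]]; exists (a, b); split=> // p q pS qS pe qe.
move: (eH p pS) (eH q qS); rewrite pe (negbTE qe) /in_hp /dotp /= => /esym pH /esym/negbT.
by rewrite -ltNge; apply: le_lt_trans.
Qed.

Lemma edge_normalP e : delaunay_edge S e -> edge_normal e != 0 /\ separates e (edge_normal e).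
Proof.
move/delaunay_separates => ex; rewrite /edge_normal.
by case: pselect => [ex'|/(_ ex)//]; exact: projT2 (cid ex').
Qed.

Lemma delaunay_edge_mem e x : delaunay_edge S e -> x \in e -> x \in S.
Proof. by case=> /fsubsetP eS _ /eS. Qed.

Lemma separates_unique e h d : e `<=` S -> h `<=` S -> #|` e| = #|` h| ->
  separates e d -> separates h d -> e = h.
Proof.
move=> eS hS eh sep_e sep_h.
have [sub_eh|/fsubsetPn[p pe ph]] := boolP (e `<=` h).
  by apply/eqP; rewrite eqEfcard sub_eh eh leqnn.
suff sub_he : h `<=` e by apply/eqP; rewrite eq_sym eqEfcard sub_he eh leqnn.
apply/fsubsetP => q qh; apply: contraT => qe.
have := sep_e p q (fsubsetP eS p pe) (fsubsetP hS q qh) pe qe.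
have := sep_h q p (fsubsetP hS q qh) (fsubsetP eS p pe) qh ph.
lra.
Qed.

Lemma separatesZ e d (k : R) : 0 < k -> separates e (k * d.1, k * d.2) -> separates e d.
Proof.
move=> k0 sep p q pS qS pe qe; have := sep p q pS qS pe qe.
by rewrite /dotp /= -!mulrA -!mulrDr ltr_pM2l.
Qed.

Lemma edge_angle_inj e h : delaunay_edge S e -> delaunay_edge S h ->
  edge_angle e = edge_angle h -> e = h.
Proof.
move=> de dh eq_angle; have [ne sep_e] := edge_normalP de; have [nh sep_h] := edge_normalP dh.
have [pos neg zero] := pangle_cross ne nh.
rewrite /edge_angle in eq_angle; rewrite eq_angle subrr /mod4 ltxx in pos neg zero.
have c : cross (edge_normal e) (edge_normal h) = 0.
  have [c|c|//] := ltrgtP (cross (edge_normal e) (edge_normal h)) 0.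
  - by have /andP[] := neg c; lra.
  - by have /andP[] := pos c; lra.
have [[_ dpos]|[two _]] := zero c; last by exfalso; move: two; lra.
move: sep_h; rewrite (cross0_scale ne c) => /separatesZ sep_h.
case: de dh => [eS [ce _]] [hS [ch _]].
by apply: separates_unique eS hS _ sep_e (sep_h _); rewrite ?ce ?ch // divr_gt0 ?dotp_self_gt0.
Qed.

End EdgeNormal.

Section HalfplaneAngles.
Variables (R : realType) (S : {fset (R * R)}) (a b c : R).
Implicit Types (g h : {fset (R * R)}).

Lemma hp_contains_conic g h (al be : R) :
  delaunay_edge S g -> delaunay_edge S h -> hp_contains a b c g -> 0 <= al -> 0 <= be ->
  edge_normal S h = (al * a + be * (edge_normal S g).1, al * b + be * (edge_normal S g).2) ->
  hp_contains a b c h.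
Proof.
move=> dg dh gH al0 be0 hE q qh; apply: contraT => qH.
have [_ sep_g] := edge_normalP dg; have [_ sep_h] := edge_normalP dh.
have qg : q \notin g by apply: contra qH => /gH.
have [gh|/fsubsetPn[p pg ph]] := boolP (g `<=` h).
  case: dg dh => _ [cg _] [_ [ch _]].
  have /eqP gE : g == h by rewrite eqEfcard gh cg ch.
  by rewrite gE qh in qg.
have pS := delaunay_edge_mem dg pg; have qS := delaunay_edge_mem dh qh.
have := sep_h q p qS pS qh ph; have := sep_g p q pS qS pg qg; have := gH p pg.
move: qH; rewrite hE /dotp /in_hp /= -ltNge.
set g1 := (edge_normal S g).1; set g2 := (edge_normal S g).2.
nra.
Qed.

Lemma hp_contains_all g (k : R) :
  delaunay_edge S g -> hp_contains a b c g -> k < 0 ->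
  edge_normal S g = (k * a, k * b) -> forall x, x \in S -> in_hp a b c x.
Proof.
move=> dg gH k0 gE x xS; have [xg|xg] := boolP (x \in g); first exact: gH.
have [_ sep_g] := edge_normalP dg.
have [g0|[p pg]] := fset_0Vmem g; first by case: dg => _ [+ _]; rewrite g0 cardfs0.
have := sep_g p x (delaunay_edge_mem dg pg) xS pg xg; have := gH p pg.
rewrite gE /dotp /in_hp /= -!mulrA -!mulrDr ltr_nM2l //.
lra.
Qed.

Definition hp_angle e := mod4 (edge_angle S e - pangle (a, b)).

Hypothesis ab0 : (a, b) != 0.

Lemma hp_angle_outside g h :
  delaunay_edge S g -> delaunay_edge S h -> hp_contains a b c g -> ~ hp_contains a b c h ->
  [/\ hp_angle g != 2, hp_angle g < 2 -> hp_angle g < hp_angle h &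
      2 < hp_angle g -> 0 < hp_angle h < hp_angle g].
Proof.
move=> dg dh gH hH; have [ng _] := edge_normalP dg; have [nh _] := edge_normalP dh.
have /andP[? ?] := pangle_range ab0; have /andP[? ?] := pangle_range ng.
have /andP[? ?] := pangle_range nh.
rewrite /hp_angle /edge_angle; split.
- (* At angle 2 the normal of g is opposite to that of H, so H contains all of S. *)
  apply/negP => /eqP two.
  have [pos neg zero] := pangle_cross ab0 ng.
  have cr0 : cross (a, b) (edge_normal S g) = 0.
    have [cr|cr|//] := ltrgtP (cross (a, b) (edge_normal S g)) 0.
    + by have /andP[] := neg cr; lra.
    + by have /andP[] := pos cr; lra.
  have [[]|[_ dneg]] := zero cr0; first by lra.
  have k0 : dotp (a, b) (edge_normal S g) / dotp (a, b) (a, b) < 0.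
    by rewrite pmulr_llt0 // invr_gt0 dotp_self_gt0.
  apply: hH => x /(delaunay_edge_mem dh).
  exact: hp_contains_all dg gH k0 (cross0_scale ab0 cr0) x.
- move=> lt2; rewrite ltNge; apply/negP => le.
  have [al [be [al0 be0 hE]]] := conic_of_angle_between ab0 nh ng (introT andP (conj le lt2)).
  exact/hH/(hp_contains_conic dg dh gH al0 be0 hE).
- move=> gt2; apply: contraT => out; exfalso; apply: hH.
  have [be [al [be0 al0 hE]]] := conic_of_angle_between ng nh ab0
    (mod4_sub_swap (pangle_range ab0) (pangle_range ng) (pangle_range nh) gt2 out).
  apply: (hp_contains_conic dg dh gH al0 be0).
  by rewrite hE /=; congr pair; ring.
Qed.

Lemma hp_angle_no_gap g h h' :
  delaunay_edge S g -> delaunay_edge S h -> delaunay_edge S h' ->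
  hp_contains a b c g -> ~ hp_contains a b c h -> ~ hp_contains a b c h' ->
  ~ (hp_angle h < hp_angle g < hp_angle h').
Proof.
move=> dg dh dh' gH hH h'H /andP[hg gh'].
have [not2 lt2 gt2] := hp_angle_outside dg dh gH hH.
have [_ lt2' gt2'] := hp_angle_outside dg dh' gH h'H.
have [/lt2|/gt2'/andP[]|/eqP] := ltrgtP (hp_angle g) 2; [lra|lra|].
by rewrite (negbTE not2).
Qed.

Lemma hp_edges_not_interleaved x w y w' :
  delaunay_edge S x -> delaunay_edge S w -> delaunay_edge S y -> delaunay_edge S w' ->
  hp_contains a b c x -> ~ hp_contains a b c w ->
  hp_contains a b c y -> ~ hp_contains a b c w' ->
  edge_angle S x < edge_angle S w < edge_angle S y -> edge_angle S y < edge_angle S w' -> False.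
Proof.
move=> dx dw dy dw' xH wH yH w'H lt_xwy lt_yw'.
have [nx _] := edge_normalP dx; have [nw' _] := edge_normalP dw'.
have /andP[x0 _] := pangle_range nx; have /andP[_ w'4] := pangle_range nw'.
have /= := mod4_sub_cyclic (pangle_range ab0) x0 w'4 lt_xwy lt_yw'.
case=> [[/andP[_ wy] yw']|[/andP[wy yw'] _]|[/andP[_ w'x] xw]|[/andP[w'x xw] _]].
- by apply: (hp_angle_no_gap dy dw dw' yH wH w'H); rewrite /hp_angle wy yw'.
- by apply: (hp_angle_no_gap dy dw dw' yH wH w'H); rewrite /hp_angle wy yw'.
- by apply: (hp_angle_no_gap dx dw' dw xH w'H wH); rewrite /hp_angle w'x xw.
- by apply: (hp_angle_no_gap dx dw' dw xH w'H wH); rewrite /hp_angle w'x xw.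
Qed.

End HalfplaneAngles.

Lemma fset_arg_min (d : Order.disp_t) (T : orderType d) (K : choiceType)
    (F : {fset K}) (f : K -> T) y :
  y \in F -> exists2 w, w \in F & forall w', w' \in F -> (f w <= f w')%O.
Proof.
move=> yF; have [i _ imin] := @arg_minP _ T F [` yF] xpredT (fun i => f (val i)) isT.
by exists (val i) => [|w' w'F]; [exact: valP | exact: (imin [` w'F])].
Qed.

Section RankParity.
Variables (d : Order.disp_t) (T : orderType d) (K : choiceType).
Variables (D : {fset K}) (key : K -> T).
Hypothesis key_inj : {in D &, injective key}.

Definition rank x := #|` [fset y in D | (key y < key x)%O]|.

Lemma rank_next x y : x \in D -> y \in D -> (key x < key y)%O ->
  exists2 w, w \in D & [/\ (key x < key w)%O, (key w <= key y)%O & rank w = (rank x).+1].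
Proof.
move=> xD yD xy.
pose F := [fset e in D | (key x < key e)%O && (key e <= key y)%O].
have yF : y \in F by rewrite !inE yD xy lexx.
have [w] := fset_arg_min key yF; rewrite !inE => /andP[wD /andP[xw wy]] wmin.
exists w => //; split => //.
rewrite /rank (_ : [fset e in D | (key e < key w)%O] = x |` [fset e in D | (key e < key x)%O]).
  by rewrite cardfsU1 !inE ltxx andbF.
apply/fsetP => e; rewrite !inE.
have [-> | ne] := eqVneq e x; first by rewrite xD xw.
case eD : (e \in D) => //=.
have [ex|xe|/(key_inj eD xD) ex] := ltgtP (key e) (key x).
- by rewrite (lt_trans ex xw).
- apply/negbTE; rewrite -leNgt; case: (leP (key w) (key e)) => // ew.
  by have := wmin e; rewrite !inE eD xe (ltW (lt_le_trans ew wy)) => /(_ isT); rewrite leNgt ew.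
- by rewrite ex ?eqxx in ne.
Qed.

Section SameParity.
Variable P : K -> Prop.
Hypothesis same_parity : forall u v, u \in D -> v \in D -> P u -> P v -> odd (rank u) = odd (rank v).

Lemma rank_parity_gap x y : x \in D -> y \in D -> P x -> P y -> (key x < key y)%O ->
  exists2 w, w \in D & ~ P w /\ (key x < key w < key y)%O.
Proof.
move=> xD yD Px Py xy; have [w wD [xw wy rw]] := rank_next xD yD xy.
have Pw : ~ P w by move=> Pw; have := same_parity xD wD Px Pw; rewrite rw /=; case: (odd _).
exists w => //; split; rewrite // xw lt_neqAle wy andbT /=.
by apply/eqP => /(key_inj wD yD) wy'; apply: Pw; rewrite wy'.
Qed.

End SameParity.

Lemma odd_rank_two_colors (P : K -> Prop) :
  (forall x w y w', x \in D -> w \in D -> y \in D -> w' \in D ->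
     P x -> ~ P w -> P y -> ~ P w' -> (key x < key w < key y)%O -> (key y < key w')%O -> False) ->
  forall x y z, x \in D -> y \in D -> z \in D -> P x -> P y -> P z ->
  [/\ x != y, x != z & y != z] ->
  exists u v, [/\ u \in D, v \in D, P u, P v & odd (rank u) != odd (rank v)].
Proof.
move=> interleave x y z xD yD zD Px Py Pz [xy xz yz].
apply: contrapT => none.
have same u v : u \in D -> v \in D -> P u -> P v -> odd (rank u) = odd (rank v).
  by move=> uD vD Pu Pv; apply: contrapT => uv; apply: none; exists u, v; split=> //; apply/eqP.
have sorted u v t : u \in D -> v \in D -> t \in D -> P u -> P v -> P t ->
    (key u < key v < key t)%O -> False.
  move=> uD vD tD Pu Pv Pt /andP[uv vt].
  have [w wD [Pw /andP[uw wv]]] := rank_parity_gap same uD vD Pu Pv uv.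
  have [w' w'D [Pw' /andP[vw' w't]]] := rank_parity_gap same vD tD Pv Pt vt.
  by apply: (interleave u w v w'); rewrite ?uw ?wv.
have neq u v : u \in D -> v \in D -> u != v -> key u != key v.
  by move=> uD vD; apply: contra => /eqP/(key_inj uD vD) ->.
move: (neq _ _ xD yD xy) (neq _ _ xD zD xz) (neq _ _ yD zD yz).
case: (ltgtP (key x) (key y)) => // kxy _; case: (ltgtP (key x) (key z)) => // kxz _;
  case: (ltgtP (key y) (key z)) => // kyz _.
- by apply: (sorted x y z); rewrite ?kxy ?kyz.
- by apply: (sorted x z y); rewrite ?kxz ?kyz.
- by have := lt_trans kxy kyz; rewrite ltNge (ltW kxz).
- by apply: (sorted z x y); rewrite ?kxz ?kxy.
- by apply: (sorted y x z); rewrite ?kxy ?kxz.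
- by have := lt_trans kxz kyz; rewrite ltNge (ltW kxy).
- by apply: (sorted y z x); rewrite ?kyz ?kxz.
- by apply: (sorted z y x); rewrite ?kyz ?kxy.
Qed.

End RankParity.

Section AngleParityColoring.
Variables (R : realType) (S : {fset (R * R)}).

Definition delaunay_edges := [fset e in fpowerset S | `[< delaunay_edge S e >]].

Lemma delaunay_edgesP e : reflect (delaunay_edge S e) (e \in delaunay_edges).
Proof.
rewrite !inE fpowersetE; apply: (iffP andP) => [[_ /asboolP]//|de].
by split; [case: de | exact/asboolP].
Qed.

Definition angle_parity e := odd (rank delaunay_edges (edge_angle S) e).

Lemma angle_parity_bichromatic a b c : (a, b) != 0 ->
  (exists e1 e2 e3, [/\ delaunay_edge S e1, delaunay_edge S e2, delaunay_edge S e3,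
     [/\ hp_contains a b c e1, hp_contains a b c e2 & hp_contains a b c e3] &
     [/\ e1 != e2, e1 != e3 & e2 != e3]]) ->
  exists e e', [/\ delaunay_edge S e, delaunay_edge S e', hp_contains a b c e,
    hp_contains a b c e' & angle_parity e != angle_parity e'].
Proof.
move=> ab0 [e1 [e2 [e3 [d1 d2 d3 [h1 h2 h3] neq]]]].
have angle_inj : {in delaunay_edges &, injective (edge_angle S)}.
  by move=> e e' /delaunay_edgesP de /delaunay_edgesP de'; apply: edge_angle_inj.
have interleave x w y w' : x \in delaunay_edges -> w \in delaunay_edges ->
    y \in delaunay_edges -> w' \in delaunay_edges ->
    hp_contains a b c x -> ~ hp_contains a b c w -> hp_contains a b c y -> ~ hp_contains a b c w' ->
    (edge_angle S x < edge_angle S w < edge_angle S y)%O -> (edge_angle S y < edge_angle S w')%O ->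
    False.
  move=> /delaunay_edgesP dx /delaunay_edgesP dw /delaunay_edgesP dy /delaunay_edgesP dw'.
  exact: (hp_edges_not_interleaved (c := c) ab0 dx dw dy dw').
have inD e : delaunay_edge S e -> e \in delaunay_edges by move/delaunay_edgesP.
have [u [v [/delaunay_edgesP du /delaunay_edgesP dv Hu Hv uv]]] :=
  odd_rank_two_colors angle_inj interleave (inD _ d1) (inD _ d2) (inD _ d3) h1 h2 h3 neq.
by exists u, v.
Qed.

End AngleParityColoring.

Section ExplicitEdges.
Variables (R : realType) (S : {fset (R * R)}).

Lemma delaunay_edge_pair u v a b c : u \in S -> v \in S -> u != v -> is_halfplane a b c ->
  (forall x, x \in S -> in_hp a b c x = (x == u) || (x == v)) -> delaunay_edge S [fset u; v].
Proof.
move=> uS vS uv ab0 cut; split; last split.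
- by apply/fsubsetP => x /fset2P[] ->.
- by rewrite cardfs2 uv.
- by exists a, b, c; split=> // x xS; rewrite cut // in_fset2.
Qed.

Lemma cardfs2_fset2 (K : choiceType) (e : {fset K}) :
  #|` e| = 2 -> exists x y, x != y /\ e = [fset x; y].
Proof.
move=> e2; have [e0|[x xe]] := fset_0Vmem e; first by rewrite e0 cardfs0 in e2.
have /cardfs1P[y ey] : #|` e `\ x| == 1 by move: e2; rewrite (cardfsD1 x) xe add1n => -[->].
have : y \in e `\ x by rewrite ey fset11.
rewrite in_fsetD1 => /andP[yx _]; exists x, y; split; first by rewrite eq_sym.
by rewrite -(fsetD1K xe) ey.
Qed.

Lemma hp_edges_among_three a b c u v w :
  (forall x, x \in S -> in_hp a b c x -> [\/ x = u, x = v | x = w]) ->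
  ~ delaunay_edge S [fset u; w] ->
  forall e, delaunay_edge S e -> hp_contains a b c e -> e = [fset u; v] \/ e = [fset v; w].
Proof.
move=> three uw e de eH; have [eS [/cardfs2_fset2[x [y [xy eE]]] _]] := de.
have xe : x \in e by rewrite eE fset21.
have ye : y \in e by rewrite eE fset22.
have := three y (fsubsetP eS y ye) (eH y ye).
have := three x (fsubsetP eS x xe) (eH x xe).
rewrite eE in de *; case=> ?; case=> ?; subst x y.
all: first [ by rewrite eqxx in xy | by left | by right | by left; rewrite fsetUC
           | by right; rewrite fsetUC | by exfalso; apply: uw | by exfalso; apply: uw; rewrite fsetUC ].
Qed.

End ExplicitEdges.

Lemma odd_cycle_monochromatic (f : nat -> bool) : f 5 = f 0 ->
  exists2 i, (i < 5)%N & f i = f i.+1.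
Proof.
move=> f50.
have : [|| f 0 == f 1, f 1 == f 2, f 2 == f 3, f 3 == f 4 | f 4 == f 5].
  by rewrite f50; case: (f 0); case: (f 1); case: (f 2); case: (f 3); case: (f 4).
by case/or4P=> [|||/orP[]] /eqP; [exists 0 | exists 1 | exists 2 | exists 3 | exists 4].
Qed.

Ltac decide_numerals :=
  rewrite ?xpair_eqE;
  repeat match goal with
  | |- context [?x == ?y] =>
      first [ rewrite (_ : (x == y) = true); last by apply/eqP; lra
            | rewrite (_ : (x == y) = false); last by apply/negbTE/eqP => ?; lra ]
  | |- context [?x <= ?y] =>
      first [ rewrite (_ : (x <= y) = true); last by lra
            | rewrite (_ : (x <= y) = false); last by apply/negbTE; rewrite -ltNge; lra ]
  end.

Section Pentagon.
Variable R : realType.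

Definition pentagon_vertex (i : nat) : R * R :=
  nth 0 [:: (0, 0); (2, 0); (3, 2); (1, 3); (-1, 2)] (i %% 5)%N.

Local Notation q := pentagon_vertex.

Definition pentagon : {fset (R * R)} := [fset q 0; q 1; q 2; q 3; q 4].

Definition pentagon_side i := [fset q i; q i.+1].

Lemma pentagon_side_mod i : pentagon_side (i %% 5)%N = pentagon_side i.
Proof.
by rewrite /pentagon_side /pentagon_vertex modn_mod -[(i %% 5)%N.+1]addn1 modnDml addn1.
Qed.

Lemma pentagon_memP x : x \in pentagon -> exists2 i, (i < 5)%N & x = q i.
Proof.
rewrite !inE => /orP[/orP[/orP[/orP[]|]|]|] /eqP ->;
  by [exists 0 | exists 1 | exists 2 | exists 3 | exists 4].
Qed.

Lemma pentagon_vertex_mem j : (j < 5)%N -> q j \in pentagon.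
Proof. by case: j => [|[|[|[|[|//]]]]] _; rewrite !inE eqxx ?orbT. Qed.

Lemma pentagon_side_delaunay i : (i < 5)%N -> delaunay_edge pentagon (pentagon_side i).
Proof.
case: i => [|[|[|[|[|//]]]]] _;
  [ apply: (delaunay_edge_pair (a := 0) (b := 1) (c := 1))
  | apply: (delaunay_edge_pair (a := -2) (b := 1) (c := -3))
  | apply: (delaunay_edge_pair (a := -1) (b := -2) (c := -5))
  | apply: (delaunay_edge_pair (a := 1) (b := -2) (c := -3))
  | apply: (delaunay_edge_pair (a := 2) (b := 1) (c := 1)) ];
  try (move=> x /pentagon_memP[j + ->]; case: j => [|[|[|[|[|//]]]]] _);
  rewrite /pentagon /is_halfplane /in_hp ?inE /=; decide_numerals; done.
Qed.

Lemma pentagon_side_neq i : (i < 5)%N -> pentagon_side i != pentagon_side i.+1.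
Proof.
move=> i5; apply/negP => /eqP sides; have : q i \in pentagon_side i.+1 by rewrite -sides fset21.
by case: i i5 {sides} => [|[|[|[|[|//]]]]] _; rewrite !inE /=; decide_numerals.
Qed.

Lemma pentagon_diagonal i : (i < 5)%N -> ~ delaunay_edge pentagon [fset q i; q i.+2].
Proof.
move=> i5 [_ [_ [a [b [c [_ cut]]]]]].
move: (cut _ (pentagon_vertex_mem (isT : 0 < 5)%N)) (cut _ (pentagon_vertex_mem (isT : 1 < 5)%N))
  (cut _ (pentagon_vertex_mem (isT : 2 < 5)%N)) (cut _ (pentagon_vertex_mem (isT : 3 < 5)%N))
  (cut _ (pentagon_vertex_mem (isT : 4 < 5)%N)).
case: i i5 {cut} => [|[|[|[|[|//]]]]] _; rewrite /in_hp !inE /=; decide_numerals;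
  move=> /esym h0 /esym h1 /esym h2 /esym h3 /esym h4;
  move: h0 h1 h2 h3 h4; rewrite -?ltNge => *; lra.
Qed.

Lemma pentagon_cap i : (i < 5)%N -> exists a b c : R,
  [/\ is_halfplane a b c, hp_contains a b c (pentagon_side i),
      hp_contains a b c (pentagon_side i.+1) &
      forall x, x \in pentagon -> in_hp a b c x -> [\/ x = q i, x = q i.+1 | x = q i.+2]].
Proof.
case: i => [|[|[|[|[|//]]]]] _;
  [exists (-1), 2, 2 | exists (-2), (-1), (-2) | exists 0, (-1), (-1)
  | exists 2, (-1), 2 | exists 1, 2, 4];
  (split; [rewrite /is_halfplane; decide_numerals; done
          | by move=> x /fset2P[] ->; rewrite /in_hp /=; lra
          | by move=> x /fset2P[] ->; rewrite /in_hp /=; lra |]);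
  move=> x /pentagon_memP[j + ->]; case: j => [|[|[|[|[|//]]]]] _;
  rewrite /in_hp /=; decide_numerals; by [|constructor 1|constructor 2|constructor 3].
Qed.

End Pentagon.

Lemma pentagon_monochromatic_pair (R : realType) (col : {fset (R * R)} -> bool) :
  exists a b c : R, is_halfplane a b c /\
    (exists e1 e2, [/\ delaunay_edge (pentagon R) e1, delaunay_edge (pentagon R) e2,
        hp_contains a b c e1, hp_contains a b c e2 & e1 != e2]) /\
    (forall e e', delaunay_edge (pentagon R) e -> delaunay_edge (pentagon R) e' ->
        hp_contains a b c e -> hp_contains a b c e' -> col e = col e').
Proof.
have [i i5 same] := @odd_cycle_monochromatic (fun i => col (pentagon_side R i)) erefl.
have [a [b [c [ab0 side1 side2 three]]]] := pentagon_cap R i5.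
have d1 := pentagon_side_delaunay R i5.
have d2 : delaunay_edge (pentagon R) (pentagon_side R i.+1).
  by rewrite -pentagon_side_mod; apply: pentagon_side_delaunay; apply: ltn_pmod.
exists a, b, c; split=> //; split; first by exists (pentagon_side R i), (pentagon_side R i.+1);
  split=> //; exact: pentagon_side_neq.
move=> e e' de de' he he'.
have cap_sides := hp_edges_among_three three (pentagon_diagonal i5).
by case: (cap_sides e de he) => ->; case: (cap_sides e' de' he') => ->.
Qed.

Theorem theorem2 (R : realType) :
  (forall S : {fset (R * R)},
     exists col : {fset (R * R)} -> bool,
       forall a b c : R, is_halfplane a b c ->
         (exists e1 e2 e3 : {fset (R * R)},
            [/\ delaunay_edge S e1, delaunay_edge S e2, delaunay_edge S e3,
                [/\ hp_contains a b c e1, hp_contains a b c e2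
                    & hp_contains a b c e3] &
                [/\ e1 != e2, e1 != e3 & e2 != e3]]) ->
         exists e e' : {fset (R * R)},
           [/\ delaunay_edge S e, delaunay_edge S e', hp_contains a b c e,
               hp_contains a b c e' & col e != col e'])
  /\
  (exists S : {fset (R * R)},
     forall col : {fset (R * R)} -> bool,
       exists a b c : R, is_halfplane a b c /\
         (exists e1 e2 : {fset (R * R)},
            [/\ delaunay_edge S e1, delaunay_edge S e2, hp_contains a b c e1,
                hp_contains a b c e2 & e1 != e2]) /\
         (forall e e' : {fset (R * R)},
            delaunay_edge S e -> delaunay_edge S e' ->
            hp_contains a b c e -> hp_contains a b c e' -> col e = col e')).
Proof.
split.
- move=> S; exists (angle_parity S) => a b c ab0.
  exact: angle_parity_bichromatic.
- exists (pentagon R); exact: pentagon_monochromatic_pair.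
Qed.
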